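(* Let $\mathcal{C}$ be a Hom-finite Krull-Schmidt additive $k$-category ($k$ a field), and suppose $\mathcal{C}$ has an almost split sequence $$X \xrightarrow{\binom{f_1}{f_2}} Y_1\amalg Y_2 \xrightarrow{(g_1,\,g_2)} Z.$$ Then: (1) there is a $k$-linear isomorphism $k_X\cong k_Z$ between the automorphism fields of $X$ and $Z$; (2) if $u: M\to Y_1$ is a morphism in $\mathcal{C}$ with $g_1u=0$, then there is $w: M\to X$ with $u=f_1w$ and $f_2w=0$; (3) if $v: Y_1\to N$ is a morphism in $\mathcal{C}$ with $vf_1=0$, then there is $w: Z\to N$ with $v=wg_1$ and $wg_2=0$.
   Context: A $k$-category is Hom-finite if all morphism spaces are finite-dimensional over $k$, and Krull-Schmidt if every nonzero object is a finite direct sum of objects with local endomorphism algebras. For an indecomposable object $X$, its automorphism field is $k_X=\mathrm{End}(X)/\mathrm{rad}(X,X)$, where $\mathrm{rad}$ denotes the Jacobson radical of $\mathcal{C}$. A morphism $f:X\to Y$ is left almost split if it is not a section and every non-section morphism $X\to M$ factors through $f$; left minimal if every endomorphism $h$ of $Y$ with $hf=f$ is an automorphism; a source morphism if it is left minimal and left almost split. Dually one defines right almost split, right minimal, and sink morphism. A sequence $X\xrightarrow{f}Y\xrightarrow{g}Z$ with $Y\neq 0$ is almost split if $f$ is a source morphism and a pseudo-kernel of $g$, and $g$ is a sink morphism and a pseudo-cokernel of $f$. In this case $X,Z$ are indecomposable. *)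

From HB Require Import structures.
From mathcomp Require Import all_boot all_algebra.
Set Implicit Arguments. Unset Strict Implicit. Unset Printing Implicit Defensive.
Import GRing.Theory.
Local Open Scope ring_scope.

Record kcat (k : fieldType) := KCat {
  Ob :> Type;
  Mor : Ob -> Ob -> vectType k;
  comp : forall X Y Z : Ob, Mor Y Z -> Mor X Y -> Mor X Z;
  idm : forall X : Ob, Mor X X;
  compA : forall (W X Y Z : Ob) (h : Mor Y Z) (g : Mor X Y) (f : Mor W X),
      comp h (comp g f) = comp (comp h g) f;
  comp1m : forall (X Y : Ob) (f : Mor X Y), comp (idm Y) f = f;
  compm1 : forall (X Y : Ob) (f : Mor X Y), comp f (idm X) = f;
  comp_linl : forall (X Y Z : Ob) (a : k) (g1 g2 : Mor Y Z) (f : Mor X Y),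
      comp (a *: g1 + g2) f = a *: comp g1 f + comp g2 f;
  comp_linr : forall (X Y Z : Ob) (a : k) (g : Mor Y Z) (f1 f2 : Mor X Y),
      comp g (a *: f1 + f2) = a *: comp g f1 + comp g f2
}.
Arguments Mor {_} _ _ _.
Arguments comp {_ _ _ _ _}.
Arguments idm {_ _}.

Declare Scope kcat_scope.
Notation "g \oc f" := (comp g f) (at level 40, left associativity) : kcat_scope.
Delimit Scope kcat_scope with C.
Local Open Scope kcat_scope.

Section Defs.
Context {k : fieldType} (C : kcat k).

Definition is_iso (X Y : C) (f : Mor C X Y) :=
  exists g : Mor C Y X, g \oc f = idm X /\ f \oc g = idm Y.

Definition is_section (X Y : C) (f : Mor C X Y) :=
  exists g : Mor C Y X, g \oc f = idm X.

Definition is_retraction (X Y : C) (f : Mor C X Y) :=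
  exists g : Mor C Y X, f \oc g = idm Y.

Definition is_zero_obj (X : C) := idm X = 0.

Definition is_biproduct (Y1 Y2 Y : C) (i1 : Mor C Y1 Y) (i2 : Mor C Y2 Y)
    (p1 : Mor C Y Y1) (p2 : Mor C Y Y2) :=
  [/\ p1 \oc i1 = idm Y1, p2 \oc i2 = idm Y2, p1 \oc i2 = 0, p2 \oc i1 = 0
    & i1 \oc p1 + i2 \oc p2 = idm Y].

Definition additive_kcat :=
  (exists O : C, is_zero_obj O) /\
  forall Y1 Y2 : C, exists (Y : C) (i1 : Mor C Y1 Y) (i2 : Mor C Y2 Y)
    (p1 : Mor C Y Y1) (p2 : Mor C Y Y2), is_biproduct i1 i2 p1 p2.

Definition local_end (X : C) :=
  idm X <> 0 /\ forall f : Mor C X X, is_iso f \/ is_iso (idm X - f).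

Definition is_finite_sum (X : C) (n : nat) (Xs : 'I_n -> C)
    (inj : forall i, Mor C (Xs i) X) (proj : forall i, Mor C X (Xs i)) :=
  [/\ forall i, proj i \oc inj i = idm (Xs i),
      forall i j, i != j -> proj j \oc inj i = 0
    & \sum_(i < n) (inj i \oc proj i) = idm X].

Definition krull_schmidt :=
  forall X : C, ~ is_zero_obj X ->
    exists (n : nat) (Xs : 'I_n -> C) (inj : forall i, Mor C (Xs i) X)
           (proj : forall i, Mor C X (Xs i)),
      is_finite_sum inj proj /\ forall i, local_end (Xs i).

Definition rad (X Y : C) (f : Mor C X Y) :=
  forall g : Mor C Y X, is_iso (idm X - g \oc f).

Definition left_almost_split (X Y : C) (f : Mor C X Y) :=
  ~ is_section f /\
  forall (M : C) (h : Mor C X M), ~ is_section h ->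
    exists h' : Mor C Y M, h = h' \oc f.

Definition right_almost_split (Y Z : C) (g : Mor C Y Z) :=
  ~ is_retraction g /\
  forall (M : C) (h : Mor C M Z), ~ is_retraction h ->
    exists h' : Mor C M Y, h = g \oc h'.

Definition left_minimal (X Y : C) (f : Mor C X Y) :=
  forall h : Mor C Y Y, h \oc f = f -> is_iso h.

Definition right_minimal (Y Z : C) (g : Mor C Y Z) :=
  forall h : Mor C Y Y, g \oc h = g -> is_iso h.

Definition source_morphism (X Y : C) (f : Mor C X Y) :=
  left_minimal f /\ left_almost_split f.

Definition sink_morphism (Y Z : C) (g : Mor C Y Z) :=
  right_minimal g /\ right_almost_split g.

Definition pseudo_kernel (X Y Z : C) (f : Mor C X Y) (g : Mor C Y Z) :=
  g \oc f = 0 /\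
  forall (M : C) (h : Mor C M Y), g \oc h = 0 -> exists h' : Mor C M X, h = f \oc h'.

Definition pseudo_cokernel (X Y Z : C) (f : Mor C X Y) (g : Mor C Y Z) :=
  g \oc f = 0 /\
  forall (N : C) (h : Mor C Y N), h \oc f = 0 -> exists h' : Mor C Z N, h = h' \oc g.

Definition almost_split (X Y Z : C) (f : Mor C X Y) (g : Mor C Y Z) :=
  [/\ ~ is_zero_obj Y, source_morphism f, pseudo_kernel f g,
      sink_morphism g & pseudo_cokernel f g].

(* k-linear isomorphism k_X = End(X)/rad(X,X) ~= k_Z = End(Z)/rad(Z,Z),
   expressed through a k-linear map End(X) -> End(Z) inducing a bijection
   of the quotients (every linear map of the quotients lifts). *)
Definition aut_fields_iso (X Z : C) :=
  exists phi : {linear Mor C X X -> Mor C Z Z},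
    (forall f, rad (phi f) <-> rad f) /\
    (forall h : Mor C Z Z, exists f, rad (h - phi f)).

End Defs.

(* Composition is k-bilinear, so every statement about
   almost split sequences has a dual obtained in the opposite category
   [opcat C]; we prove each fact once, on the "left" side, and transport it.
   1. If f : X -> Y is left almost split, End(X) is local: an endomorphism
      of X is either invertible or factors through f, and the factoring
      ones are exactly the radical rad(X,X).  Dually for right almost split
      g : Y -> Z (using Jacobson's lemma to see that [rad] is self-dual).
   2. For an almost split sequence X -f-> Y -g-> Z, every a in End(X)
      extends to an endomorphism (a, b, c) of the sequence and vice versa;
      a lies in the radical iff c does.  Choosing the lifts c on a basis
      of End(X) gives a k-linear map End(X) -> End(Z) inducing k_X ~ k_Z.
   3. Parts (2) and (3) are a computation with the biproduct Y = Y1 + Y2,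
      part (3) being the dual of part (2). *)
From Pilot Require Import Defs.
From HB Require Import structures.
From mathcomp Require Import all_boot all_algebra.
From Stdlib Require Import Classical.
Import GRing.Theory.
Local Open Scope ring_scope.
Local Open Scope kcat_scope.

Section Composition.
Context {k : fieldType} {C : kcat k}.

Lemma compmA {W X Y Z : C} (h : Mor C Y Z) (g : Mor C X Y) (f : Mor C W X) :
  h \oc (g \oc f) = (h \oc g) \oc f.
Proof. exact: Defs.compA. Qed.

Definition postcomp {X Y Z : C} (g : Mor C Y Z) (f : Mor C X Y) := g \oc f.
Definition precomp {X Y Z : C} (f : Mor C X Y) (g : Mor C Y Z) := g \oc f.

HB.instance Definition _ (X Y Z : C) (g : Mor C Y Z) :=
  GRing.isLinear.Build k _ _ _ (@postcomp X Y Z g) (fun a => comp_linr a g).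
HB.instance Definition _ (X Y Z : C) (f : Mor C X Y) :=
  GRing.isLinear.Build k _ _ _ (@precomp X Y Z f) (fun a g1 g2 => comp_linl a g1 g2 f).

Variables (X Y Z : C).
Implicit Types (f : Mor C X Y) (g : Mor C Y Z).

Lemma comp0l f : (0 : Mor C Y Z) \oc f = 0.
Proof. exact: (linear0 (@precomp X Y Z f)). Qed.
Lemma comp0r g : g \oc (0 : Mor C X Y) = 0.
Proof. exact: (linear0 (@postcomp X Y Z g)). Qed.
Lemma compDl g1 g2 f : (g1 + g2) \oc f = g1 \oc f + g2 \oc f.
Proof. exact: (linearD (@precomp X Y Z f)). Qed.
Lemma compDr g f1 f2 : g \oc (f1 + f2) = g \oc f1 + g \oc f2.
Proof. exact: (linearD (@postcomp X Y Z g)). Qed.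
Lemma compBl g1 g2 f : (g1 - g2) \oc f = g1 \oc f - g2 \oc f.
Proof. exact: (linearB (@precomp X Y Z f)). Qed.
Lemma compBr g f1 f2 : g \oc (f1 - f2) = g \oc f1 - g \oc f2.
Proof. exact: (linearB (@postcomp X Y Z g)). Qed.

End Composition.

Section Isomorphisms.
Context {k : fieldType} {C : kcat k}.

Lemma iso_comp (X Y Z : C) (u : Mor C Y Z) (v : Mor C X Y) :
  is_iso u -> is_iso v -> is_iso (u \oc v).
Proof.
move=> [u' [u'u uu']] [v' [v'v vv']]; exists (v' \oc u'); split.
  by rewrite compmA -(compmA v') u'u compm1.
by rewrite compmA -(compmA u) vv' compm1.
Qed.

Lemma iso0 (X : C) : is_iso (0 : Mor C X X) -> idm X = 0.
Proof. by move=> [w [w0 _]]; rewrite -w0 comp0r. Qed.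

Lemma rad0 (X Y : C) : Defs.rad (0 : Mor C X Y).
Proof. by move=> g; rewrite comp0r subr0; exists (idm X); rewrite comp1m. Qed.

(* Jacobson's lemma: 1 - ba invertible implies 1 - ab invertible, with
   inverse 1 + a (1 - ba)^-1 b. *)
Lemma iso_1subC (X Y : C) (a : Mor C X Y) (b : Mor C Y X) :
  is_iso (idm X - b \oc a) -> is_iso (idm Y - a \oc b).
Proof.
move=> [v [vK Kv]]; exists (idm Y + a \oc (v \oc b)).
have vE : v \oc (b \oc a) = v - idm X by rewrite -[idm X]vK compBr compm1 subKr.
have Ev : (b \oc a) \oc v = v - idm X by rewrite -[idm X]Kv compBl comp1m subKr.
have E1 : (a \oc (v \oc b)) \oc (a \oc b) = a \oc (v \oc b) - a \oc b.
  by rewrite -!compmA (compmA b a b) (compmA v (b \oc a) b) vE compBl comp1m compBr.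
have E2 : (a \oc b) \oc (a \oc (v \oc b)) = a \oc (v \oc b) - a \oc b.
  by rewrite -!compmA (compmA b a (v \oc b)) (compmA (b \oc a) v b) Ev compBl comp1m compBr.
split.
- by rewrite compDl comp1m compBr compm1 E1 subKr subrK.
- by rewrite compBl comp1m compDr compm1 E2 (addrC (a \oc b)) subrK addrK.
Qed.

Lemma radC (X Y : C) (f : Mor C X Y) :
  Defs.rad f <-> forall g : Mor C Y X, is_iso (idm Y - f \oc g).
Proof. by split=> radf g; apply: iso_1subC; apply: radf. Qed.

End Isomorphisms.

Definition opcat {k : fieldType} (C : kcat k) : kcat k :=
  @KCat k C (fun X Y => Mor C Y X) (fun X Y Z h g => g \oc h) (fun X => idm X)
    (fun W X Y Z h g f => esym (compmA f g h))
    (fun X Y f => compm1 f) (fun X Y f => comp1m f)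
    (fun X Y Z a g1 g2 f => comp_linr a f g1 g2)
    (fun X Y Z a g f1 f2 => comp_linl a f1 f2 g).

Section Opposite.
Context {k : fieldType} {C : kcat k}.

Lemma iso_op (X Y : C) (f : Mor C X Y) : @is_iso k (opcat C) Y X f <-> is_iso f.
Proof. by split=> -[g [gf fg]]; exists g. Qed.

Lemma rad_op (X Y : C) (f : Mor C X Y) : @Defs.rad k (opcat C) Y X f <-> Defs.rad f.
Proof.
rewrite radC; split=> radf g; first by apply/iso_op; apply: radf.
by apply/iso_op; apply: radf.
Qed.

End Opposite.

Section Factorization.
Context {k : fieldType} {C : kcat k}.

Definition factors_left {X Y W : C} (f : Mor C X Y) (a : Mor C X W) :=
  exists h : Mor C Y W, a = h \oc f.

(* c : W -> Z factors through g : Y -> Z, i.e. c = g h; this is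
   [factors_left] in the opposite category. *)
Definition factors_right {W Y Z : C} (g : Mor C Y Z) (c : Mor C W Z) :=
  exists h : Mor C W Y, c = g \oc h.

Variables (X Y W : C) (f : Mor C X Y).

Lemma factors_leftD (a b : Mor C X W) :
  factors_left f a -> factors_left f b -> factors_left f (a + b).
Proof. by move=> [h ->] [h' ->]; exists (h + h'); rewrite compDl. Qed.

Lemma factors_leftB (a b : Mor C X W) :
  factors_left f a -> factors_left f b -> factors_left f (a - b).
Proof. by move=> [h ->] [h' ->]; exists (h - h'); rewrite compBl. Qed.

Lemma factors_leftM (V : C) (x : Mor C W V) (a : Mor C X W) :
  factors_left f a -> factors_left f (x \oc a).
Proof. by move=> [h ->]; exists (x \oc h); rewrite compmA. Qed.

End Factorization.

Section LeftAlmostSplit.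
Context {k : fieldType} {C : kcat k}.
Context {X Y : C} {f : Mor C X Y}.
Hypothesis fas : left_almost_split f.

(* X is not a zero object, since otherwise f would be a section. *)
Lemma las_idm_neq0 : idm X <> 0.
Proof. by move=> X0; apply: fas.1; exists 0; rewrite comp0l X0. Qed.

Lemma nonsection_factors (W : C) (a : Mor C X W) :
  ~ is_section a <-> factors_left f a.
Proof.
split; first by move/fas.2.
by move=> [h ->] [r rhf]; apply: fas.1; exists (r \oc h); rewrite -compmA.
Qed.

Lemma factors_unit (n : Mor C X X) : factors_left f n -> is_iso (idm X - n).
Proof.
move=> fn; have not_f1 : ~ factors_left f (idm X).
  by move/nonsection_factors; apply; exists (idm X); rewrite comp1m.
have [r rK] : is_section (idm X - n).
  apply: NNPP => /nonsection_factors f1n; apply: not_f1.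
  by rewrite -(subrK n (idm X)); apply: factors_leftD.
have [s sK] : is_section r.
  apply: NNPP => /nonsection_factors fr; apply: not_f1.
  rewrite -rK compBr compm1; apply: factors_leftB => //; exact: factors_leftM.
have sE : s = idm X - n by rewrite -[s]compm1 -{1}rK compmA sK comp1m.
by exists r; split => //; rewrite -sE.
Qed.

Lemma iso_or_factors (a : Mor C X X) : is_iso a \/ factors_left f a.
Proof.
have [fa|nfa] := classic (factors_left f a); [by right | left].
have [r ra] : is_section a by apply: NNPP => /nonsection_factors.
have [t tar] : is_section (a \oc r).
  apply: NNPP => /nonsection_factors /factors_unit [w [w1ar _]].
  have a0 : a = 0.
    by rewrite -[a]comp1m -w1ar -compmA compBl comp1m -compmA ra compm1 subrr comp0r.
  by apply: las_idm_neq0; rewrite -ra a0 comp0r.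
have ta : t \oc a = a by rewrite -[t \oc a]compm1 -ra compmA -(compmA t) tar comp1m.
by exists r; split => //; rewrite -ta -compmA tar.
Qed.

Lemma rad_factors (a : Mor C X X) : Defs.rad a <-> factors_left f a.
Proof.
split; last by move=> fa g; apply/factors_unit/factors_leftM.
move=> rada; have [[a' [a'a _]]|//] := iso_or_factors a.
by case: las_idm_neq0; apply: iso0; rewrite -(subrr (idm X)) -{2}a'a; apply: rada.
Qed.

End LeftAlmostSplit.

Section RightAlmostSplit.
Context {k : fieldType} {C : kcat k}.
Context {Y Z : C} {g : Mor C Y Z}.
Hypothesis gas : right_almost_split g.

Lemma factors_unit_right (n : Mor C Z Z) : factors_right g n -> is_iso (idm Z - n).
Proof. by move=> /(factors_unit (C := opcat C) gas) /iso_op. Qed.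

Lemma iso_or_factors_right (c : Mor C Z Z) : is_iso c \/ factors_right g c.
Proof. by case: (iso_or_factors (C := opcat C) gas c) => [/iso_op|]; [left|right]. Qed.

Lemma rad_factors_right (c : Mor C Z Z) : Defs.rad c <-> factors_right g c.
Proof. by rewrite -rad_op; exact: (rad_factors (C := opcat C) gas c). Qed.

End RightAlmostSplit.

Lemma left_minimal_neq0 {k : fieldType} {C : kcat k} {X Y : C} {f : Mor C X Y} :
  left_minimal f -> ~ is_zero_obj Y -> f <> 0.
Proof. by move=> fmin Ynz f0; apply/Ynz/iso0/fmin; rewrite f0 comp0l. Qed.

Lemma right_minimal_neq0 {k : fieldType} {C : kcat k} {Y Z : C} {g : Mor C Y Z} :
  right_minimal g -> ~ is_zero_obj Y -> g <> 0.
Proof. by move=> gmin Ynz g0; apply/Ynz/iso0/gmin; rewrite g0 comp0r. Qed.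

Section Endomorphisms.
Context {k : fieldType} {C : kcat k} {X Y Z : C}.
Implicit Types (f : Mor C X Y) (g : Mor C Y Z) (a : Mor C X X) (c : Mor C Z Z).

Definition induces f g a c := exists b : Mor C Y Y, b \oc f = f \oc a /\ g \oc b = c \oc g.

Lemma lift_left f g : left_almost_split f -> pseudo_cokernel f g ->
  forall a, exists c, induces f g a c.
Proof.
move=> fas [gf0 pc] a.
have fa_nonsec : ~ is_section (f \oc a).
  move=> [s sfa]; have a_sec : is_section a by exists (s \oc f); rewrite -compmA.
  have [[a' [a'a aa']]|] := iso_or_factors fas a; last by move/(nonsection_factors fas).
  have sfE : s \oc f = a' by rewrite -[s \oc f]compm1 -aa' compmA -(compmA s) sfa comp1m.
  by apply: fas.1; exists (a \oc s); rewrite -compmA sfE aa'.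
have [b fab] := fas.2 _ _ fa_nonsec.
have [c gbc] : exists c, g \oc b = c \oc g.
  by apply: pc; rewrite -compmA -fab compmA gf0 comp0l.
by exists c, b.
Qed.

Lemma factors_transfer f g a c :
  pseudo_cokernel f g -> right_almost_split g -> g <> 0 ->
  induces f g a c -> factors_left f a -> factors_right g c.
Proof.
move=> [gf0 pc] gas g_neq0 [b [bfa gbc]] [h ahf].
have [[c' [c'c cc']]|//] := iso_or_factors_right gas c; case: g_neq0.
have [t bE] : exists t, b - f \oc h = t \oc g.
  by apply: pc; rewrite compBl bfa ahf -compmA subrr.
have cgt_g0 : (c - g \oc t) \oc g = 0.
  by rewrite compBl -gbc -compmA -bE -compBr subKr compmA gf0 comp0l.
have [w [w_cgt _]] : is_iso (c - g \oc t).
  have -> : c - g \oc t = (idm Z - g \oc (t \oc c')) \oc c.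
    by rewrite compBl comp1m -!compmA c'c compm1.
  by apply: iso_comp; [apply: (factors_unit_right gas); exists (t \oc c') | exists c'].
by rewrite -[g]comp1m -w_cgt -compmA cgt_g0 comp0r.
Qed.

End Endomorphisms.

Lemma lift_right {k : fieldType} {C : kcat k} {X Y Z : C}
    (f : Mor C X Y) (g : Mor C Y Z) :
  right_almost_split g -> pseudo_kernel f g ->
  forall c : Mor C Z Z, exists a : Mor C X X, induces f g a c.
Proof.
move=> gas pk c; have [a [b [gbc bfa]]] := lift_left (C := opcat C) g f gas pk c.
by exists a, b.
Qed.

Lemma factors_transfer_dual {k : fieldType} {C : kcat k} {X Y Z : C}
    (f : Mor C X Y) (g : Mor C Y Z) (a : Mor C X X) (c : Mor C Z Z) :
  pseudo_kernel f g -> left_almost_split f -> f <> 0 ->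
  induces f g a c -> factors_right g c -> factors_left f a.
Proof.
move=> pk fas f_neq0 [b [bfa gbc]].
by apply: (factors_transfer (C := opcat C) g f c a pk fas f_neq0); exists b.
Qed.

(* A relation P between two finite-dimensional spaces that is total and
   closed under linear combinations contains the graph of a linear map:
   choose images on a basis and extend linearly. *)
Lemma linear_choice {k : fieldType} (U V : vectType k) (P : U -> V -> Prop) :
  P 0 0 ->
  (forall x u u' v v', P u v -> P u' v' -> P (x *: u + u') (x *: v + v')) ->
  (forall u, exists v, P u v) ->
  exists phi : {linear U -> V}, forall u, P u (phi u).
Proof.
move=> P00 Plin Ptot; pose B := vbasis (fullv : {vspace U}).
have [v vP] := fin_all_exists (fun i : 'I_(\dim (fullv : {vspace U})) => Ptot B`_i).
pose phi u := \sum_i coord B i u *: v i.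
have phi_lin : linear phi.
  move=> x u u'; rewrite /phi scaler_sumr -big_split; apply: eq_bigr => i _ /=.
  by rewrite linearP /= scalerDl scalerA.
exists (HB.pack_for {linear U -> V} phi (GRing.isLinear.Build k U V _ phi phi_lin)).
move=> u /=; rewrite {1}(coord_vbasis (memvf u)) /phi.
by elim/big_rec2: _ => // i u1 v1 _; apply: Plin.
Qed.

(* Part (1) for any almost split sequence: lifting endomorphisms of X
   to the sequence gives a linear map End(X) -> End(Z) which preserves and
   reflects the radical and is onto modulo the radical. *)
Lemma almost_split_aut_fields_iso {k : fieldType} {C : kcat k} {X Y Z : C}
    (f : Mor C X Y) (g : Mor C Y Z) :
  almost_split f g -> aut_fields_iso X Z.
Proof.
case=> Ynz [fmin fas] pk [gmin gas] pcok.
have rad_induces a c : induces f g a c -> (Defs.rad c <-> Defs.rad a).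
  move=> fgac; rewrite (rad_factors fas) (rad_factors_right gas); split.
    exact: (factors_transfer_dual _ _ _ _ pk fas (left_minimal_neq0 fmin Ynz) fgac).
  exact: (factors_transfer _ _ _ _ pcok gas (right_minimal_neq0 gmin Ynz) fgac).
have [phi phiP] : exists phi : {linear Mor C X X -> Mor C Z Z},
    forall a, induces f g a (phi a).
  apply: linear_choice; last exact: (lift_left _ _ fas pcok).
    by exists 0; rewrite comp0l comp0r comp0l comp0r.
  move=> x a a' c c' [b [bfa gbc]] [b' [bfa' gbc']]; exists (x *: b + b').
  by split; rewrite comp_linl comp_linr ?bfa ?bfa' ?gbc ?gbc'.
exists phi; split=> [a | h]; first exact/rad_induces/phiP.
have [a [b [bfa gbh]]] := lift_right _ _ gas pk h.
have [b' [bfa' gba']] := phiP a.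
exists a; have /rad_induces -> : induces f g 0 (h - phi a).
  exists (b - b'); split; first by rewrite compBl bfa bfa' subrr comp0r.
  by rewrite compBr compBl gbh gba'.
exact: rad0.
Qed.

Section Biproduct.
Context {k : fieldType} {C : kcat k} {Y1 Y2 Y : C}.
Context {i1 : Mor C Y1 Y} {i2 : Mor C Y2 Y} {p1 : Mor C Y Y1} {p2 : Mor C Y Y2}.
Hypothesis bp : is_biproduct i1 i2 p1 p2.

Lemma biproduct_op : @is_biproduct k (opcat C) Y1 Y2 Y p1 p2 i1 i2.
Proof. by case: bp. Qed.

Lemma proj1_sum (W : C) (x1 : Mor C W Y1) (x2 : Mor C W Y2) :
  p1 \oc (i1 \oc x1 + i2 \oc x2) = x1.
Proof. by case: bp => p1i1 _ p1i2 _ _; rewrite compDr !compmA p1i1 p1i2 comp1m comp0l addr0. Qed.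

Lemma proj2_sum (W : C) (x1 : Mor C W Y1) (x2 : Mor C W Y2) :
  p2 \oc (i1 \oc x1 + i2 \oc x2) = x2.
Proof. by case: bp => _ p2i2 _ p2i1 _; rewrite compDr !compmA p2i2 p2i1 comp1m comp0l add0r. Qed.

Lemma sum_inj1 (W : C) (y1 : Mor C Y1 W) (y2 : Mor C Y2 W) :
  (y1 \oc p1 + y2 \oc p2) \oc i1 = y1.
Proof. by case: bp => p1i1 _ _ p2i1 _; rewrite compDl -!compmA p1i1 p2i1 compm1 comp0r addr0. Qed.

Lemma pseudo_kernel_component {X Z : C} {f1 : Mor C X Y1} {f2 : Mor C X Y2}
    {g1 : Mor C Y1 Z} {g2 : Mor C Y2 Z} :
  pseudo_kernel (i1 \oc f1 + i2 \oc f2) (g1 \oc p1 + g2 \oc p2) ->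
  forall (M : C) (u : Mor C M Y1), g1 \oc u = 0 ->
    exists w : Mor C M X, u = f1 \oc w /\ f2 \oc w = 0.
Proof.
move=> [_ pk] M u g1u0.
have [w uw] : exists w, i1 \oc u = (i1 \oc f1 + i2 \oc f2) \oc w.
  by apply: pk; rewrite compmA sum_inj1.
have [p1i1 _ _ p2i1 _] := bp.
exists w; split; first by rewrite -[u]comp1m -p1i1 -compmA uw compmA proj1_sum.
by rewrite -(proj2_sum _ f1 f2) -compmA -uw compmA p2i1 comp0l.
Qed.

End Biproduct.

Theorem lemma1p1 (k : fieldType) (C : kcat k) :
  additive_kcat C -> krull_schmidt C ->
  forall (X Y1 Y2 Y Z : C)
    (i1 : Mor C Y1 Y) (i2 : Mor C Y2 Y) (p1 : Mor C Y Y1) (p2 : Mor C Y Y2),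
  is_biproduct i1 i2 p1 p2 ->
  forall (f1 : Mor C X Y1) (f2 : Mor C X Y2) (g1 : Mor C Y1 Z) (g2 : Mor C Y2 Z),
  almost_split (i1 \oc f1 + i2 \oc f2) (g1 \oc p1 + g2 \oc p2) ->
  [/\ aut_fields_iso X Z,
      (forall (M : C) (u : Mor C M Y1), g1 \oc u = 0 ->
         exists w : Mor C M X, u = f1 \oc w /\ f2 \oc w = 0)
    & (forall (N : C) (v : Mor C Y1 N), v \oc f1 = 0 ->
         exists w : Mor C Z N, v = w \oc g1 /\ w \oc g2 = 0)].
Proof.
move=> _ _ X Y1 Y2 Y Z i1 i2 p1 p2 bp f1 f2 g1 g2 fg_as.
have [_ _ pk _ pcok] := fg_as.
split; first exact: almost_split_aut_fields_iso fg_as.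
  exact: (pseudo_kernel_component bp pk).
(* Part (3) is part (2) in the opposite category. *)
exact: (pseudo_kernel_component (C := opcat C) (biproduct_op bp)
          (f1 := g1) (f2 := g2) (g1 := f1) (g2 := f2) pcok).
Qed.
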